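(* $\mathrm{cov}(\mathcal M)\leq\mathfrak{ss}_c$ and dually $\mathfrak{ss}_c^\perp\leq\mathrm{non}(\mathcal M)$.
   Context: Let $\mathfrak S$ be the set of all sequences $\mathbf a=\langle a_i:i\in\omega\rangle$ of rational numbers with $a_i\to 0$. Let $[\omega]^\omega_\omega$ denote the set of infinite coinfinite subsets of $\omega$. For infinite $X\subseteq\omega$ with increasing enumeration $\langle i_n\rangle$ put $\mathbf a\restriction X=\langle a_{i_n}:n\in\omega\rangle$ and write $\sum_X\mathbf a$ for $\sum_n a_{i_n}$. A series is convergent if its partial sums converge to a real number; it is conditional if $\sum_{\{i:a_i>0\}}\mathbf a=\infty$ and $\sum_{\{i:a_i<0\}}\mathbf a=-\infty$; conditionally convergent if both. Let $\mathfrak S_c$, $\mathfrak S_{cc}$ be the sets of $\mathbf a\in\mathfrak S$ whose series is convergent, resp. conditionally convergent. $\mathfrak{ss}_c$ is the least cardinality of a family $\mathcal X\subseteq[\omega]^\omega_\omega$ such that for every $\mathbf a\in\mathfrak S_{cc}$ there is $X\in\mathcal X$ with $\sum_X\mathbf a$ convergent; $\mathfrak{ss}_c^\perp$ is the least cardinality of a family $\mathcal A\subseteq\mathfrak S_{cc}$ such that no $X\in[\omega]^\omega_\omega$ makes $\sum_X\mathbf a$ convergent for all $\mathbf a\in\mathcal A$. $\mathrm{cov}(\mathcal M)$ and $\mathrm{non}(\mathcal M)$ are the covering and uniformity numbers of the meagre ideal. *)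

From Stdlib Require Import Reals QArith Qreals List.
Open Scope R_scope.

Definition infinite_set (X : nat -> Prop) : Prop :=
  forall n : nat, exists m : nat, (n <= m)%nat /\ X m.

Definition inf_coinf (X : nat -> Prop) : Prop :=
  infinite_set X /\ infinite_set (fun i => ~ X i).

Definition enumerates (X : nat -> Prop) (e : nat -> nat) : Prop :=
  (forall n, (e n < e (S n))%nat) /\ (forall i, X i <-> exists n, e n = i).

Definition psum (b : nat -> R) (N : nat) : R := sum_f_R0 b N.

Definition series_conv (b : nat -> R) : Prop :=
  exists l : R, Un_cv (psum b) l.

Definition qseq (a : nat -> Q) : nat -> R := fun i => Q2R (a i).

Definition sum_on_conv (a : nat -> Q) (X : nat -> Prop) : Prop :=
  exists e, enumerates X e /\ series_conv (fun n => qseq a (e n)).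

Definition sum_on_pinfty (a : nat -> Q) (X : nat -> Prop) : Prop :=
  exists e, enumerates X e /\ cv_infty (psum (fun n => qseq a (e n))).

Definition sum_on_minfty (a : nat -> Q) (X : nat -> Prop) : Prop :=
  exists e, enumerates X e /\
    cv_infty (fun N => - psum (fun n => qseq a (e n)) N).

Definition in_S (a : nat -> Q) : Prop := Un_cv (qseq a) 0.

Definition conditional (a : nat -> Q) : Prop :=
  sum_on_pinfty a (fun i => Qlt 0 (a i)) /\
  sum_on_minfty a (fun i => Qlt (a i) 0).

Definition in_Scc (a : nat -> Q) : Prop :=
  in_S a /\ series_conv (qseq a) /\ conditional a.

Definition cantor := nat -> bool.

Definition extends (x : cantor) (s : list bool) : Prop :=
  forall i, (i < length s)%nat -> x i = nth i s false.

Definition nowhere_dense (N : cantor -> Prop) : Prop :=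
  forall s : list bool, exists t : list bool,
    forall x, extends x (s ++ t) -> ~ N x.

Definition meagre (M : cantor -> Prop) : Prop :=
  exists Ns : nat -> cantor -> Prop,
    (forall n, nowhere_dense (Ns n)) /\ (forall x, M x -> exists n, Ns n x).

(* To a point [x] of Cantor space with infinitely many ones attach the rational
   series that puts the terms 1, -1, 1/2, -1/2, 1/3, -1/3, ... of the alternating
   harmonic series, in this order, at the positions of the ones of [x], and 0
   elsewhere; it is conditionally convergent.  For an infinite coinfinite [X], the
   [x] whose series converges along [X] form a meagre set: every finite initial
   segment can be continued so that the next positive terms fall into [X] and the
   negative ones outside it, and then the subseries along [X] grows by a harmonic
   block 1/(k+2) + ... + 1/(2k+2) >= 1/2 beyond any prescribed position.  Hence a
   family witnessing ss_c yields a cover of Cantor space by as many meagre sets,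
   and the series attached to a non-meagre set have no common convergent
   subseries along an infinite coinfinite set. *)

From Stdlib Require Import Reals QArith Qreals List Lia Lra Classical ClassicalEpsilon FunctionalExtensionality.
Open Scope R_scope.

(** * Counting ones *)

Lemma strictly_increasing_lt_iff (f : nat -> nat) :
  (forall n, (f n < f (S n))%nat) -> forall m n, (f m < f n <-> m < n)%nat.
Proof.
  intros Hf m n; split; intros Hmn.
  - destruct (Nat.lt_ge_cases m n) as [|Hnm]; [assumption|].
    enough (f n <= f m)%nat by lia.
    induction Hnm as [|k Hk IH]; [lia|]. specialize (Hf k). lia.
  - induction Hmn as [|k Hk IH]; [apply Hf|]. specialize (Hf k). lia.
Qed.

Lemma enumerates_lt_iff X e : enumerates X e -> forall m n, (e m < e n <-> m < n)%nat.
Proof. intros [He _]. exact (strictly_increasing_lt_iff e He). Qed.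

Definition nat_diverges (f : nat -> nat) : Prop :=
  forall M, exists N, forall n, (N <= n)%nat -> (M <= f n)%nat.

Section OnesBelow.
Open Scope nat_scope.

Fixpoint ones_below (x : cantor) (i : nat) : nat :=
  match i with
  | O => O
  | S j => ones_below x j + if x j then 1 else 0
  end.

Definition infinitely_many_ones (x : cantor) : Prop :=
  forall n, exists m, n <= m /\ x m = true.

Lemma ones_below_mono x a b : a <= b -> ones_below x a <= ones_below x b.
Proof. induction 1 as [|b _ IH]; cbn; [|destruct (x b)]; lia. Qed.

Lemma ones_below_S_true x i : x i = true -> ones_below x (S i) = S (ones_below x i).
Proof. intros Hi; cbn; rewrite Hi; lia. Qed.

Lemma ones_below_lt x i j : x i = true -> i < j -> ones_below x i < ones_below x j.
Proof.
  intros Hi Hij. pose proof (ones_below_mono x (S i) j Hij).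
  rewrite ones_below_S_true in * by exact Hi. lia.
Qed.

Lemma ones_below_inj x i j :
  x i = true -> x j = true -> ones_below x i = ones_below x j -> i = j.
Proof.
  intros Hi Hj Hij. destruct (Nat.lt_trichotomy i j) as [H|[H|H]]; [| exact H |].
  - pose proof (ones_below_lt x i j Hi H); lia.
  - pose proof (ones_below_lt x j i Hj H); lia.
Qed.

Lemma ones_below_ext x y n :
  (forall i, i < n -> x i = y i) -> ones_below x n = ones_below y n.
Proof.
  induction n as [|n IH]; intros Hxy; cbn; [reflexivity|].
  rewrite IH by (intros; apply Hxy; lia). rewrite (Hxy n) by lia. reflexivity.
Qed.

Lemma ones_below_const x a b :
  a <= b -> (forall i, a <= i < b -> x i = false) -> ones_below x b = ones_below x a.
Proof.
  induction 1 as [|b Hab IH]; intros Hx; [reflexivity|].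
  cbn. rewrite (Hx b) by lia. rewrite IH by (intros; apply Hx; lia). lia.
Qed.

Lemma ones_below_diverges x : infinitely_many_ones x -> nat_diverges (ones_below x).
Proof.
  intros Hx M. induction M as [|M [N HN]]; [exists 0; lia|].
  destruct (Hx N) as [m [HNm Hm]]. exists (S m). intros n Hn.
  pose proof (ones_below_lt x m n Hm Hn). specialize (HN m HNm). lia.
Qed.

Lemma ones_below_reaches x i k :
  k < ones_below x i -> exists j, x j = true /\ ones_below x j = k.
Proof.
  induction i as [|i IH]; cbn; intros Hk; [lia|].
  destruct (Nat.eq_dec k (ones_below x i)) as [->|Hne].
  - destruct (x i) eqn:Hi; [exists i; auto | lia].
  - apply IH. destruct (x i); lia.
Qed.

Definition kth_one (x : cantor) (k : nat) : nat :=
  epsilon (inhabits 0) (fun i => x i = true /\ ones_below x i = k).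

Lemma kth_one_spec x k :
  infinitely_many_ones x -> x (kth_one x k) = true /\ ones_below x (kth_one x k) = k.
Proof.
  intros Hx. apply (epsilon_spec (inhabits 0) (fun i => x i = true /\ ones_below x i = k)).
  destruct (ones_below_diverges x Hx (S k)) as [N HN].
  exact (ones_below_reaches x N k (HN N (le_n N))).
Qed.

Lemma kth_one_enumerates x (f : nat -> nat) (P : nat -> Prop) :
  infinitely_many_ones x -> (forall n, f n < f (S n)) ->
  (forall k, P k <-> exists n, f n = k) ->
  enumerates (fun i => x i = true /\ P (ones_below x i)) (fun n => kth_one x (f n)).
Proof.
  intros Hx Hf HP. split.
  - intros n. destruct (kth_one_spec x (f n) Hx) as [_ Hn].
    destruct (kth_one_spec x (f (S n)) Hx) as [_ HSn].
    destruct (Nat.lt_ge_cases (kth_one x (f n)) (kth_one x (f (S n)))) as [|Hle]; [assumption|].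
    apply (ones_below_mono x) in Hle. specialize (Hf n). lia.
  - intros i; split.
    + intros [Hi Hc]. apply HP in Hc as [n Hn]. exists n.
      destruct (kth_one_spec x (f n) Hx) as [H1 H2].
      apply ones_below_inj with x; congruence.
    + intros [n <-]. destruct (kth_one_spec x (f n) Hx) as [H1 H2].
      split; [exact H1|]. rewrite H2. apply HP. eauto.
Qed.

End OnesBelow.

(** * Limits and harmonic sums *)

Lemma Un_cv_comp (u : nat -> R) l f :
  Un_cv u l -> nat_diverges f -> Un_cv (fun n => u (f n)) l.
Proof.
  intros Hu Hf eps Heps. destruct (Hu eps Heps) as [M HM]. destruct (Hf M) as [N HN].
  exists N. intros n Hn. apply HM, HN, Hn.
Qed.

Lemma Un_cv_0_abs_le (u v : nat -> R) :
  Un_cv v 0 -> (forall n, Rabs (u n) <= Rabs (v n)) -> Un_cv u 0.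
Proof.
  intros Hv Huv eps Heps. destruct (Hv eps Heps) as [N HN]. exists N. intros n Hn.
  specialize (HN n Hn). specialize (Huv n). unfold Rdist in *. rewrite Rminus_0_r in *. lra.
Qed.

Lemma div2_diverges : nat_diverges Nat.div2.
Proof. intros M. exists (2 * M)%nat. intros n Hn. apply Nat.div2_le_lower_bound, Hn. Qed.

Fixpoint sum_below (b : nat -> R) (k : nat) : R :=
  match k with
  | O => 0
  | S k => sum_below b k + b k
  end.

Lemma psum_sum_below f N : psum f N = sum_below f (S N).
Proof.
  unfold psum. induction N as [|N IH]; cbn [sum_f_R0 sum_below] in *; [ring|].
  rewrite IH. reflexivity.
Qed.

Lemma sum_below_diff_ext g g' a b : (a <= b)%nat ->
  (forall i, (a <= i < b)%nat -> g i = g' i) ->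
  sum_below g b - sum_below g a = sum_below g' b - sum_below g' a.
Proof.
  induction 1 as [|b Hab IH]; intros Hg; [ring|].
  cbn. rewrite (Hg b) by lia.
  enough (sum_below g b - sum_below g a = sum_below g' b - sum_below g' a) by lra.
  apply IH. intros; apply Hg; lia.
Qed.

Lemma sum_below_zero_range g a b : (a <= b)%nat ->
  (forall i, (a <= i < b)%nat -> g i = 0) -> sum_below g b = sum_below g a.
Proof.
  intros Hab Hg. pose proof (sum_below_diff_ext g (fun _ => 0) a b Hab Hg) as H.
  assert (Hz : forall n, sum_below (fun _ => 0) n = 0) by (induction n; cbn; lra).
  rewrite !Hz in H. lra.
Qed.

Definition harm (m : nat) : R := / INR (S m).

Lemma harm_pos m : 0 < harm m.
Proof. apply Rinv_0_lt_compat, lt_0_INR; lia. Qed.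

Lemma harm_cv_0 : Un_cv harm 0.
Proof.
  intros eps Heps. destruct (archimed_cor1 eps Heps) as [N [HN HN0]]. exists N. intros m Hm.
  unfold Rdist. rewrite Rminus_0_r, Rabs_right by (left; apply harm_pos).
  eapply Rle_lt_trans; [|exact HN]. apply Rinv_le_contravar; [apply lt_0_INR; lia|].
  apply le_INR; lia.
Qed.

Lemma harmonic_block n : sum_f_R0 harm (2 * n + 1) - sum_f_R0 harm n >= 1/2.
Proof.
  assert (Hj : forall j, (j <= n + 1)%nat ->
            sum_f_R0 harm (n + j) - sum_f_R0 harm n >= INR j * harm (2 * n + 1)).
  { induction j as [|j IH]; intros Hj; [rewrite Nat.add_0_r; cbn; lra|].
    rewrite Nat.add_succ_r, tech5, S_INR.
    assert (harm (S (n + j)) >= harm (2 * n + 1)).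
    { apply Rle_ge, Rinv_le_contravar; [apply lt_0_INR; lia | apply le_INR; lia]. }
    specialize (IH ltac:(lia)). nra. }
  specialize (Hj (n + 1)%nat (le_n _)). replace (n + (n + 1))%nat with (2 * n + 1)%nat in Hj by lia.
  enough (INR (n + 1) * harm (2 * n + 1) = 1/2) by lra.
  unfold harm. replace (S (2 * n + 1)) with (2 * (n + 1))%nat by lia.
  rewrite mult_INR. assert (INR (n + 1) <> 0) by (apply not_0_INR; lia).
  cbn [INR]. field. auto.
Qed.

Lemma harmonic_mono a b : (a <= b)%nat -> sum_f_R0 harm a <= sum_f_R0 harm b.
Proof. induction 1 as [|b _ IH]; [lra|]. rewrite tech5. pose proof (harm_pos (S b)). lra. Qed.

Lemma harmonic_diverges : cv_infty (sum_f_R0 harm).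
Proof.
  assert (Hk : forall k, exists N, INR k / 2 <= sum_f_R0 harm N).
  { induction k as [|k [N HN]].
    - exists O. cbn. pose proof (harm_pos 0). lra.
    - exists (2 * N + 1)%nat. pose proof (harmonic_block N). rewrite S_INR. lra. }
  intros M. destruct (INR_archimed (1/2) M) as [k Hk']; [lra|].
  destruct (Hk k) as [N HN]. exists N. intros n Hn. pose proof (harmonic_mono N n Hn). lra.
Qed.

Definition alt_harm (k : nat) : R :=
  if Nat.even k then harm (Nat.div2 k) else - harm (Nat.div2 k).

Definition alt_harmQ (k : nat) : Q :=
  if Nat.even k then 1 # Pos.of_succ_nat (Nat.div2 k) else - (1 # Pos.of_succ_nat (Nat.div2 k)).

Lemma Q2R_alt_harmQ k : Q2R (alt_harmQ k) = alt_harm k.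
Proof.
  assert (Hh : forall m, Q2R (1 # Pos.of_succ_nat m) = harm m).
  { intros m. unfold Q2R, harm; cbn [Qnum Qden].
    rewrite Znat.Zpos_P_of_succ_nat, <- Znat.Nat2Z.inj_succ, <- INR_IZR_INZ. ring. }
  unfold alt_harmQ, alt_harm. destruct (Nat.even k); rewrite ?Q2R_opp, Hh; reflexivity.
Qed.

Lemma alt_harm_even n : alt_harm (2 * n) = harm n.
Proof. unfold alt_harm. rewrite Nat.even_even, Nat.div2_double. reflexivity. Qed.

Lemma alt_harm_odd n : alt_harm (2 * n + 1) = - harm n.
Proof. unfold alt_harm. rewrite Nat.even_odd, Nat.div2_odd'. reflexivity. Qed.

Lemma alt_harm_cv_0 : Un_cv alt_harm 0.
Proof.
  apply Un_cv_0_abs_le with (fun k => harm (Nat.div2 k)).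
  - exact (Un_cv_comp harm 0 Nat.div2 harm_cv_0 div2_diverges).
  - intros k. unfold alt_harm. destruct (Nat.even k); rewrite ?Rabs_Ropp; lra.
Qed.

Lemma even_div2_succ k : Nat.even k = true -> Nat.div2 (S k) = Nat.div2 k.
Proof. intros Hk. symmetry. apply Nat.Even_div2, Nat.even_spec, Hk. Qed.

Lemma sum_below_alt_harm k :
  sum_below alt_harm k = if Nat.even k then 0 else harm (Nat.div2 k).
Proof.
  induction k as [|k IH]; [reflexivity|].
  cbn [sum_below]. rewrite IH, Nat.even_succ, <- Nat.negb_even. unfold alt_harm.
  destruct (Nat.even k) eqn:Hk; cbn [negb]; [|ring].
  rewrite even_div2_succ by exact Hk. ring.
Qed.

Lemma sum_below_alt_harm_cv_0 : Un_cv (sum_below alt_harm) 0.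
Proof.
  apply Un_cv_0_abs_le with (fun k => harm (Nat.div2 k)).
  - exact (Un_cv_comp harm 0 Nat.div2 harm_cv_0 div2_diverges).
  - intros k. rewrite sum_below_alt_harm. destruct (Nat.even k); [rewrite Rabs_R0; apply Rabs_pos | lra].
Qed.

Definition alt_harm_pos (k : nat) : R := if Nat.even k then harm (Nat.div2 k) else 0.

Lemma alt_harm_pos_even n : alt_harm_pos (2 * n) = harm n.
Proof. unfold alt_harm_pos. rewrite Nat.even_even, Nat.div2_double. reflexivity. Qed.

Lemma sum_below_alt_harm_pos n : sum_below alt_harm_pos (S (2 * n)) = sum_f_R0 harm n.
Proof.
  induction n as [|n IH]; [cbn; unfold alt_harm_pos; cbn; ring|].
  replace (S (2 * S n)) with (S (S (S (2 * n)))) by lia.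
  cbn [sum_below sum_f_R0] in *. rewrite IH.
  replace (S (S (2 * n))) with (2 * S n)%nat by lia. rewrite alt_harm_pos_even.
  unfold alt_harm_pos. rewrite Nat.even_succ, <- Nat.negb_even, Nat.even_even. cbn [negb]. ring.
Qed.

(** * The series attached to a point of Cantor space *)

Definition spread (x : cantor) (b : nat -> R) (i : nat) : R :=
  if x i then b (ones_below x i) else 0.

Lemma spread_kth_one x b k : infinitely_many_ones x -> spread x b (kth_one x k) = b k.
Proof. intros Hx. unfold spread. destruct (kth_one_spec x k Hx) as [-> ->]. reflexivity. Qed.

Lemma sum_below_spread x b n : sum_below (spread x b) n = sum_below b (ones_below x n).
Proof.
  induction n as [|n IH]; [reflexivity|]. cbn. rewrite IH. unfold spread.
  destruct (x n); [rewrite Nat.add_1_r | rewrite Nat.add_0_r]; cbn; ring.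
Qed.

Lemma spread_cv_0 x b : infinitely_many_ones x -> Un_cv b 0 -> Un_cv (spread x b) 0.
Proof.
  intros Hx Hb. apply Un_cv_0_abs_le with (fun i => b (ones_below x i)).
  - exact (Un_cv_comp b 0 _ Hb (ones_below_diverges x Hx)).
  - intros i. unfold spread. destruct (x i); [lra | rewrite Rabs_R0; apply Rabs_pos].
Qed.

Lemma spread_series_cv x b l : infinitely_many_ones x ->
  Un_cv (sum_below b) l -> Un_cv (psum (spread x b)) l.
Proof.
  intros Hx Hb. replace (psum (spread x b)) with (fun N => sum_below b (ones_below x (S N))).
  - apply (Un_cv_comp (sum_below b) l (fun N => ones_below x (S N)) Hb).
    intros M. destruct (ones_below_diverges x Hx M) as [N HN]. exists N. intros n Hn. apply HN. lia.
  - apply functional_extensionality. intros N. rewrite psum_sum_below, sum_below_spread. reflexivity.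
Qed.

Definition alt_series (x : cantor) (i : nat) : Q :=
  if x i then alt_harmQ (ones_below x i) else 0%Q.

Lemma qseq_alt_series x : qseq (alt_series x) = spread x alt_harm.
Proof.
  apply functional_extensionality. intros i. unfold qseq, alt_series, spread.
  destruct (x i); [apply Q2R_alt_harmQ | unfold Q2R; cbn; ring].
Qed.

Lemma alt_series_sign_iff x i :
  (Qlt 0 (alt_series x i) <-> x i = true /\ Nat.Even (ones_below x i)) /\
  (Qlt (alt_series x i) 0 <-> x i = true /\ Nat.Odd (ones_below x i)).
Proof.
  assert (HQ : forall q r, Qlt q r <-> Q2R q < Q2R r) by (split; [apply Qlt_Rlt | apply Rlt_Qlt]).
  rewrite !HQ. change (Q2R (alt_series x i)) with (qseq (alt_series x) i).
  rewrite qseq_alt_series. unfold spread, alt_harm.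
  replace (Q2R 0) with 0 by (unfold Q2R; cbn; ring).
  rewrite <- Nat.even_spec, <- Nat.odd_spec, <- Nat.negb_even.
  pose proof (harm_pos (Nat.div2 (ones_below x i))).
  destruct (x i), (Nat.even (ones_below x i)); cbn [negb].
  all: split; split; intros Hc; try (split; reflexivity); try lra; destruct Hc; discriminate.
Qed.

Lemma alt_series_pinfty x : infinitely_many_ones x ->
  sum_on_pinfty (alt_series x) (fun i => Qlt 0 (alt_series x i)).
Proof.
  intros Hx. exists (fun n => kth_one x (2 * n)). split.
  - destruct (kth_one_enumerates x (fun n => 2 * n)%nat Nat.Even Hx ltac:(cbv beta; intros; lia)
      ltac:(cbv beta; intros k; split; intros [n Hn]; exists n; lia)) as [Hmono Hrange].
    split; [exact Hmono|]. intros i. rewrite (proj1 (alt_series_sign_iff x i)). apply Hrange.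
  - replace (fun n => qseq (alt_series x) (kth_one x (2 * n))) with harm; [apply harmonic_diverges|].
    apply functional_extensionality. intros n.
    rewrite qseq_alt_series, spread_kth_one, alt_harm_even by exact Hx. reflexivity.
Qed.

Lemma alt_series_minfty x : infinitely_many_ones x ->
  sum_on_minfty (alt_series x) (fun i => Qlt (alt_series x i) 0).
Proof.
  intros Hx. exists (fun n => kth_one x (2 * n + 1)). split.
  - destruct (kth_one_enumerates x (fun n => 2 * n + 1)%nat Nat.Odd Hx ltac:(cbv beta; intros; lia)
      ltac:(cbv beta; intros k; split; intros [n Hn]; exists n; lia)) as [Hmono Hrange].
    split; [exact Hmono|]. intros i. rewrite (proj2 (alt_series_sign_iff x i)). apply Hrange.
  - replace (fun N => - psum (fun n => qseq (alt_series x) (kth_one x (2 * n + 1))) N)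
      with (sum_f_R0 harm); [apply harmonic_diverges|].
    assert (Hterm : forall n, qseq (alt_series x) (kth_one x (2 * n + 1)) = - harm n).
    { intros n. rewrite qseq_alt_series, spread_kth_one, alt_harm_odd by exact Hx. reflexivity. }
    apply functional_extensionality. intros N. unfold psum.
    induction N as [|N IH]; cbn [sum_f_R0]; rewrite !Hterm; lra.
Qed.

Lemma alt_series_Scc x : infinitely_many_ones x -> in_Scc (alt_series x).
Proof.
  intros Hx. split; [|split; [|split]].
  - unfold in_S. rewrite qseq_alt_series. exact (spread_cv_0 x _ Hx alt_harm_cv_0).
  - exists 0. rewrite qseq_alt_series. exact (spread_series_cv x _ 0 Hx sum_below_alt_harm_cv_0).
  - exact (alt_series_pinfty x Hx).
  - exact (alt_series_minfty x Hx).
Qed.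

(** * Meagreness of the points with a convergent subseries *)

Definition restrict (X : nat -> Prop) (g : nat -> R) (i : nat) : R :=
  if excluded_middle_informative (X i) then g i else 0.

Lemma restrict_nonzero X g i : restrict X g i <> 0 -> X i.
Proof. unfold restrict. destruct excluded_middle_informative as [HX|]; [exact (fun _ => HX) | tauto]. Qed.

Lemma psum_enumerates X e g : enumerates X e ->
  forall m, psum (fun n => g (e n)) m = sum_below (restrict X g) (S (e m)).
Proof.
  intros He.
  assert (Hon : forall n, restrict X g (e n) = g (e n)).
  { intros n. unfold restrict. destruct excluded_middle_informative as [|HX]; [reflexivity|].
    exfalso. apply HX, He. eauto. }
  assert (Hgap : forall a b, (a <= b)%nat -> (forall i n, (a <= i < b)%nat -> e n <> i) ->
            sum_below (restrict X g) b = sum_below (restrict X g) a).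
  { intros a b Hab Hi. apply sum_below_zero_range; [exact Hab|]. intros i Hab'. unfold restrict.
    destruct excluded_middle_informative as [HX|]; [|reflexivity].
    apply He in HX as [n Hn]. exfalso. exact (Hi i n Hab' Hn). }
  pose proof (enumerates_lt_iff X e He) as Hlt.
  induction m as [|m IH]; cbn [sum_below]; rewrite Hon.
  - rewrite (Hgap 0%nat (e 0%nat)); [unfold psum; cbn; ring | lia |].
    intros i n Hi <-. pose proof (proj1 (Hlt n 0%nat)). lia.
  - rewrite (Hgap (S (e m)) (e (S m))).
    + unfold psum in *. cbn [sum_f_R0]. rewrite IH. reflexivity.
    + apply (Hlt m (S m)). lia.
    + intros i n Hi <-. pose proof (proj1 (Hlt m n)). pose proof (proj1 (Hlt n (S m))). lia.
Qed.

Lemma restrict_cauchy X e g : enumerates X e -> series_conv (fun n => g (e n)) ->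
  forall eps, 0 < eps -> exists p, forall i j, (p <= i)%nat -> (p <= j)%nat -> X i -> X j ->
    Rabs (sum_below (restrict X g) (S j) - sum_below (restrict X g) (S i)) < eps.
Proof.
  intros He [l Hl] eps Heps. destruct (Hl (eps / 2)) as [N HN]; [lra|].
  exists (e N). intros i j Hi Hj HXi HXj.
  apply He in HXi as [m1 <-]. apply He in HXj as [m2 <-].
  assert (Hidx : forall m, (e N <= e m)%nat -> (N <= m)%nat).
  { intros m Hm. destruct (Nat.le_gt_cases N m) as [|Hlt]; [assumption|].
    apply (enumerates_lt_iff X e He) in Hlt. lia. }
  rewrite <- !(psum_enumerates X e g He).
  pose proof (HN m1 (Hidx m1 Hi)) as H1. pose proof (HN m2 (Hidx m2 Hj)) as H2.
  unfold Rdist in *. apply Rabs_def2 in H1, H2. apply Rabs_def1; lra.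
Qed.

Lemma extends_app x s t : extends x (s ++ t) -> extends x s.
Proof. intros H i Hi. rewrite H by (rewrite length_app; lia). apply app_nth1, Hi. Qed.

Lemma nowhere_dense_union (A B : cantor -> Prop) :
  nowhere_dense A -> nowhere_dense B -> nowhere_dense (fun x => A x \/ B x).
Proof.
  intros HA HB s. destruct (HA s) as [t1 H1]. destruct (HB (s ++ t1)) as [t2 H2].
  exists (t1 ++ t2). intros x Hx [Ha|Hb].
  - apply (H1 x); [|exact Ha]. rewrite app_assoc in Hx. exact (extends_app _ _ _ Hx).
  - apply (H2 x); [|exact Hb]. rewrite <- app_assoc. exact Hx.
Qed.

Lemma nowhere_dense_intro (N : cantor -> Prop) :
  (forall s, exists (z : cantor) L, extends z s /\ (length s <= L)%nat /\
     forall x, (forall i, (i < L)%nat -> x i = z i) -> ~ N x) -> nowhere_dense N.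
Proof.
  intros H s. destruct (H s) as [z [L [Hzs [HL HN]]]].
  exists (map z (seq (length s) (L - length s))). intros x Hx. apply HN. intros i Hi.
  rewrite Hx by (rewrite length_app, length_map, length_seq; lia).
  destruct (Nat.lt_ge_cases i (length s)).
  - rewrite app_nth1 by assumption. symmetry. apply Hzs. assumption.
  - rewrite app_nth2 by assumption.
    rewrite nth_indep with (d' := z 0%nat) by (rewrite length_map, length_seq; lia).
    rewrite map_nth, seq_nth by lia. f_equal. lia.
Qed.

Definition zero_from (n : nat) (x : cantor) : Prop := forall m, (n <= m)%nat -> x m = false.

Lemma zero_from_nowhere_dense n : nowhere_dense (zero_from n).
Proof.
  apply nowhere_dense_intro. intros s. exists (fun i => nth i s true), (S (length s + n)).
  split; [|split; [lia|]].
  - intros i Hi. apply nth_indep, Hi.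
  - intros x Hx Hz. specialize (Hz (length s + n)%nat ltac:(lia)).
    rewrite Hx, nth_overflow in Hz by lia. discriminate.
Qed.

Section Chain.
Variable P : nat -> nat -> Prop.
Hypothesis P_unbounded : forall l q, exists r, (q <= r)%nat /\ P l r.

Fixpoint chain (start l : nat) : nat :=
  let lower := match l with O => start | S l' => S (chain start l') end in
  epsilon (inhabits 0%nat) (fun r => (lower <= r)%nat /\ P l r).

Lemma chain_spec start l :
  (match l with O => start | S l' => S (chain start l') end <= chain start l)%nat /\
  P l (chain start l).
Proof.
  destruct l; cbn [chain];
    apply (epsilon_spec (inhabits 0%nat) (fun r => (_ <= r)%nat /\ P _ r)), P_unbounded.
Qed.

Lemma chain_lt start l : (chain start l < chain start (S l))%nat.
Proof. exact (proj1 (chain_spec start (S l))). Qed.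

End Chain.

Definition ones_at (pos : nat -> nat) : cantor :=
  fun i => if excluded_middle_informative (exists l, pos l = i) then true else false.

Lemma ones_below_ones_at (pos : nat -> nat) (z : cantor) r0 :
  (forall l, (pos l < pos (S l))%nat) -> (r0 <= pos 0)%nat ->
  (forall i, (r0 <= i)%nat -> z i = ones_at pos i) ->
  forall l, z (pos l) = true /\ ones_below z (pos l) = (ones_below z r0 + l)%nat.
Proof.
  intros Hpos Hr0 Hz. pose proof (strictly_increasing_lt_iff pos Hpos) as Hlt.
  assert (Hr : forall l, (r0 <= pos l)%nat).
  { intros l. destruct l; [exact Hr0|]. pose proof (proj2 (Hlt 0%nat (S l))). lia. }
  assert (Hgap : forall i, (r0 <= i)%nat -> (forall l, pos l <> i) -> z i = false).
  { intros i Hi Hne. rewrite Hz by exact Hi. unfold ones_at.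
    destruct excluded_middle_informative as [[l Hl]|]; [exact (False_ind _ (Hne l Hl)) | reflexivity]. }
  assert (Hone : forall l, z (pos l) = true).
  { intros l. rewrite Hz by apply Hr. unfold ones_at.
    destruct excluded_middle_informative as [|Hn]; [reflexivity | exfalso; eauto]. }
  intros l. split; [apply Hone|]. induction l as [|l IH].
  - rewrite (ones_below_const z r0 (pos 0%nat)); [lia | exact Hr0 |].
    intros i Hi. apply Hgap; [lia|]. intros l <-. pose proof (proj1 (Hlt l 0%nat)). lia.
  - rewrite (ones_below_const z (S (pos l)) (pos (S l))); [| apply Hpos |].
    + rewrite ones_below_S_true by apply Hone. lia.
    + intros i Hi. apply Hgap; [pose proof (Hr l); lia|]. intros l' <-.
      pose proof (proj1 (Hlt l l')). pose proof (proj1 (Hlt l' (S l))). lia.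
Qed.

Definition small_oscillation (X : nat -> Prop) (p : nat) (x : cantor) : Prop :=
  forall i j, (p <= i)%nat -> (p <= j)%nat -> X i -> X j ->
    Rabs (sum_below (restrict X (spread x alt_harm)) (S j)
          - sum_below (restrict X (spread x alt_harm)) (S i)) < 1/2.

Lemma inf_coinf_meets X (A : Prop) q : inf_coinf X -> exists r, (q <= r)%nat /\ (X r <-> A).
Proof.
  intros [Hin Hout]. destruct (classic A) as [HA|HA].
  - destruct (Hin q) as [r [Hr HX]]. exists r. tauto.
  - destruct (Hout q) as [r [Hr HX]]. exists r. tauto.
Qed.

Lemma alternating_extension X (w : cantor) r0 : inf_coinf X ->
  exists z : cantor, (forall i, (i < r0)%nat -> z i = w i) /\ infinitely_many_ones z /\
    forall i, (r0 <= i)%nat -> restrict X (spread z alt_harm) i = spread z alt_harm_pos i.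
Proof.
  intros HX. set (k0 := ones_below w r0).
  (* The one with count [k0 + l] lands in [X] exactly when it carries a positive term. *)
  set (P := fun l r => X r <-> Nat.Even (k0 + l)).
  assert (HP : forall l q, exists r, (q <= r)%nat /\ P l r) by (intros; apply inf_coinf_meets, HX).
  set (pos := chain P r0).
  assert (Hpos : forall l, (r0 + l <= pos l)%nat).
  { induction l as [|l IH].
    - pose proof (proj1 (chain_spec P HP r0 0)) as H0. fold pos in H0. lia.
    - pose proof (chain_lt P HP r0 l) as Hl. fold pos in Hl. lia. }
  set (z := fun i => if Nat.ltb i r0 then w i else ones_at pos i).
  assert (Hcnt : forall l, z (pos l) = true /\ ones_below z (pos l) = (k0 + l)%nat).
  { replace k0 with (ones_below z r0).
    - apply ones_below_ones_at; [apply (chain_lt P HP) | specialize (Hpos 0%nat); lia |].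
      intros i Hi. unfold z. destruct (Nat.ltb_spec i r0); [lia | reflexivity].
    - apply ones_below_ext. intros i Hi. unfold z. destruct (Nat.ltb_spec i r0); [reflexivity | lia]. }
  exists z. split; [|split].
  - intros i Hi. unfold z. destruct (Nat.ltb_spec i r0); [reflexivity | lia].
  - intros n. exists (pos n). split; [specialize (Hpos n); lia | apply Hcnt].
  - intros i Hi. unfold restrict, spread. destruct (z i) eqn:Hzi.
    2: { destruct excluded_middle_informative; reflexivity. }
    assert (Hl : exists l, pos l = i).
    { unfold z, ones_at in Hzi. destruct (Nat.ltb_spec i r0); [lia|].
      destruct excluded_middle_informative as [Hl|]; [exact Hl | discriminate]. }
    destruct Hl as [l <-]. rewrite (proj2 (Hcnt l)).
    pose proof (proj2 (chain_spec P HP r0 l)) as HposX. fold pos in HposX. unfold P in HposX.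
    rewrite <- Nat.even_spec in HposX. unfold alt_harm, alt_harm_pos.
    destruct excluded_middle_informative as [HXl|HXl], (Nat.even (k0 + l)); try reflexivity.
    + exfalso. apply HposX in HXl. discriminate.
    + exfalso. apply HXl, HposX. reflexivity.
Qed.

Lemma restricted_harmonic_gap X z r0 : infinitely_many_ones z ->
  (forall i, (r0 <= i)%nat -> restrict X (spread z alt_harm) i = spread z alt_harm_pos i) ->
  exists i j, (r0 <= i < j)%nat /\ X i /\ X j /\
    sum_below (restrict X (spread z alt_harm)) (S j)
    - sum_below (restrict X (spread z alt_harm)) (S i) >= 1/2.
Proof.
  intros Hz Hmask. set (k := ones_below z r0).
  (* The ones counted [2k] and [2(2k+1)] lie beyond [r0], and between them the
     subseries along [X] is the harmonic block from [k+1] to [2k+1]. *)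
  assert (Hkth : forall n, (k <= n)%nat ->
            (r0 <= kth_one z (2 * n))%nat /\ X (kth_one z (2 * n)) /\
            ones_below z (kth_one z (2 * n)) = (2 * n)%nat).
  { intros n Hn. destruct (kth_one_spec z (2 * n) Hz) as [Hone Hcnt].
    assert (Hr : (r0 <= kth_one z (2 * n))%nat).
    { destruct (Nat.le_gt_cases r0 (kth_one z (2 * n))) as [|Hlt]; [assumption|].
      apply (ones_below_lt z _ r0 Hone) in Hlt. fold k in Hlt. lia. }
    split; [exact Hr|]. split; [|exact Hcnt].
    apply (restrict_nonzero X (spread z alt_harm)). rewrite Hmask, spread_kth_one, alt_harm_pos_even
      by assumption.
    apply Rgt_not_eq, harm_pos. }
  destruct (Hkth k (le_n k)) as [Hri [HXi Hci]].
  destruct (Hkth (2 * k + 1)%nat ltac:(lia)) as [Hrj [HXj Hcj]].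
  set (i := kth_one z (2 * k)) in *. set (j := kth_one z (2 * (2 * k + 1))) in *.
  assert (Hij : (i < j)%nat).
  { destruct (Nat.le_gt_cases j i) as [Hle|]; [|assumption]. apply (ones_below_mono z) in Hle. lia. }
  exists i, j. split; [lia|]. split; [exact HXi|]. split; [exact HXj|].
  rewrite (sum_below_diff_ext _ (spread z alt_harm_pos) (S i) (S j)); [| lia | intros; apply Hmask; lia].
  rewrite !sum_below_spread, !ones_below_S_true, Hci, Hcj by (apply kth_one_spec, Hz).
  rewrite !sum_below_alt_harm_pos. apply harmonic_block.
Qed.

Lemma small_oscillation_nowhere_dense X p : inf_coinf X -> nowhere_dense (small_oscillation X p).
Proof.
  intros HX. apply nowhere_dense_intro. intros s.
  destruct (alternating_extension X (fun i => nth i s false) (Nat.max (length s) p) HX)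
    as [z [Hzs [Hz Hmask]]].
  destruct (restricted_harmonic_gap X z _ Hz Hmask) as [i [j [Hij [HXi [HXj Hgap]]]]].
  exists z, (S j). split; [|split].
  - intros k Hk. apply Hzs. lia.
  - lia.
  - intros x Hx Hosc. specialize (Hosc i j ltac:(lia) ltac:(lia) HXi HXj).
    rewrite (sum_below_diff_ext _ (restrict X (spread z alt_harm)) (S i) (S j)) in Hosc; [| lia |].
    + pose proof (Rle_abs (sum_below (restrict X (spread z alt_harm)) (S j)
                           - sum_below (restrict X (spread z alt_harm)) (S i))). lra.
    + intros k Hk. unfold restrict, spread. rewrite Hx by lia.
      rewrite (ones_below_ext x z k) by (intros; apply Hx; lia). reflexivity.
Qed.

(* Points with finitely many ones, a meagre set, get a fixed dummy series. *)
Definition series_of (x : cantor) : nat -> Q :=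
  if excluded_middle_informative (infinitely_many_ones x) then alt_series x
  else alt_series (fun _ => true).

Lemma series_of_Scc x : in_Scc (series_of x).
Proof.
  unfold series_of. destruct excluded_middle_informative as [Hx|]; apply alt_series_Scc; [exact Hx|].
  intros m. exists m. auto.
Qed.

Lemma convergent_subseries_meagre X : inf_coinf X -> meagre (fun x => sum_on_conv (series_of x) X).
Proof.
  intros HX. exists (fun p x => zero_from p x \/ small_oscillation X p x). split.
  - intros p. apply nowhere_dense_union;
      [apply zero_from_nowhere_dense | apply small_oscillation_nowhere_dense, HX].
  - intros x Hconv. unfold series_of in Hconv.
    destruct excluded_middle_informative as [Hx|Hx].
    + destruct Hconv as [e [He Hc]]. rewrite qseq_alt_series in Hc.
      destruct (restrict_cauchy X e _ He Hc (1/2)) as [p Hp]; [lra|].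
      exists p. right. exact Hp.
    + apply not_all_ex_not in Hx as [p Hp]. exists p. left. intros m Hm.
      destruct (x m) eqn:Hxm; [|reflexivity]. exfalso. apply Hp. eauto.
Qed.

Theorem mainTheorem3 :
  (forall (I : Type) (F : I -> nat -> Prop),
      (forall i, inf_coinf (F i)) ->
      (forall a, in_Scc a -> exists i, sum_on_conv a (F i)) ->
      exists Ms : I -> cantor -> Prop,
        (forall i, meagre (Ms i)) /\ (forall x, exists i, Ms i x))
  /\
  (forall (I : Type) (Y : I -> cantor),
      ~ meagre (fun x => exists i, Y i = x) ->
      exists A : I -> nat -> Q,
        (forall i, in_Scc (A i)) /\
        (forall X, inf_coinf X -> exists i, ~ sum_on_conv (A i) X)).
Proof.
  split.
  - intros I F HF Hcover. exists (fun i x => sum_on_conv (series_of x) (F i)). split.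
    + intros i. exact (convergent_subseries_meagre (F i) (HF i)).
    + intros x. exact (Hcover _ (series_of_Scc x)).
  - intros I Y HY. exists (fun i => series_of (Y i)). split; [intros i; apply series_of_Scc|].
    intros X HX. apply NNPP. intros Hall. apply HY.
    destruct (convergent_subseries_meagre X HX) as [Ns [HNs Hc]]. exists Ns. split; [exact HNs|].
    intros x [i <-]. apply Hc. apply NNPP. intros Hi. apply Hall. exists i. exact Hi.
Qed.
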